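(* Let $v_1,\dots,v_m\in\mathbb{R}^d$, $V=\{v_1,\dots,v_m\}$, and $r\in\mathbb{R}^d$. For every minimal $r$-balanced subset $S\subset V$, the corresponding (unique) weight vector $\lambda(S)$ is an extreme point of the polytope $F(V,r)$.
   Context: A subset $S\subset V$ is $r$-balanced if $r\in\mathrm{relint}(\mathrm{conv}(S))$; it is minimal $r$-balanced if it is $r$-balanced and no proper subset of it is $r$-balanced. Let $V$ also denote the $d\times m$ matrix with columns $v_1,\dots,v_m$. A weight vector is a vector $\lambda\in\mathbb{R}^m$ with $\lambda\ge0$, $\sum_i\lambda_i=1$, $V\lambda=r$; $F(V,r)$ is the set of all weight vectors. $\mathrm{supp}(\lambda)$ is the set of points $v_i$ with $\lambda_i\neq0$. For $S\subset V$, $\lambda(S)=\{\lambda\in F(V,r)\mid\mathrm{supp}(\lambda)\subset S\}$; for minimal $r$-balanced $S$ this set is a single vector, denoted $\lambda(S)$. *)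

From mathcomp Require Import all_boot all_order all_algebra.
From mathcomp Require Import reals.
Set Implicit Arguments. Unset Strict Implicit. Unset Printing Implicit Defensive.
Import Order.TTheory GRing.Theory Num.Theory.
Local Open Scope ring_scope.

Section Defs.
Variables (R : realType) (d m : nat).
(* V : d x m matrix whose columns  col i V  are the points v_1,...,v_m;
   subsets of V are represented by index sets S : {set 'I_m}. *)
Variable V : 'M[R]_(d, m).

Definition conv_hull (S : {set 'I_m}) (x : 'cV[R]_d) : Prop :=
  exists mu : 'cV[R]_m,
    (forall i, 0 <= mu i 0) /\ (forall i, i \notin S -> mu i 0 = 0) /\
    \sum_i mu i 0 = 1 /\ V *m mu = x.

Definition aff_hull (S : {set 'I_m}) (x : 'cV[R]_d) : Prop :=
  exists mu : 'cV[R]_m,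
    (forall i, i \notin S -> mu i 0 = 0) /\
    \sum_i mu i 0 = 1 /\ V *m mu = x.

Definition sqdist (x y : 'cV[R]_d) : R := \sum_k (x k 0 - y k 0) ^+ 2.

Definition in_relint_conv (S : {set 'I_m}) (r : 'cV[R]_d) : Prop :=
  conv_hull S r /\
  exists eps : R, 0 < eps /\
    forall x, aff_hull S x -> sqdist x r < eps ^+ 2 -> conv_hull S x.

Definition balanced (r : 'cV[R]_d) (S : {set 'I_m}) : Prop :=
  in_relint_conv S r.

Definition minimal_balanced (r : 'cV[R]_d) (S : {set 'I_m}) : Prop :=
  balanced r S /\ forall T : {set 'I_m}, T \proper S -> ~ balanced r T.

Definition weight_vector (r : 'cV[R]_d) (lam : 'cV[R]_m) : Prop :=
  (forall i, 0 <= lam i 0) /\ \sum_i lam i 0 = 1 /\ V *m lam = r.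

Definition supp (lam : 'cV[R]_m) : {set 'I_m} := [set i | lam i 0 != 0].

Definition lambda_set (r : 'cV[R]_d) (S : {set 'I_m}) (lam : 'cV[R]_m) : Prop :=
  weight_vector r lam /\ supp lam \subset S.

Definition extreme_point (r : 'cV[R]_d) (lam : 'cV[R]_m) : Prop :=
  weight_vector r lam /\
  forall (mu nu : 'cV[R]_m) (t : R),
    weight_vector r mu -> weight_vector r nu -> 0 < t -> t < 1 ->
    lam = t *: mu + (1 - t) *: nu -> mu = lam /\ nu = lam.
End Defs.

(* Every weight vector g is r-balanced on its own support T: g is bounded
   below on T, and a bounded right inverse of mu |-> (V mu, sum_i mu_i) on
   vectors supported by T turns each x of aff(T) close to r into a small,
   hence nonnegative, perturbation of g representing x.  By minimality, every
   weight vector supported in S then has support exactly S.  So lambda(S) is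
   a single point: from two distinct ones, walking from lam along the line
   through mu until a coordinate first vanishes gives a weight vector with a
   smaller support.  Finally, if lam = t mu + (1 - t) nu then mu and nu are
   supported in supp lam, a subset of S, so both equal lam. *)

From mathcomp Require Import all_boot all_order all_algebra.
From mathcomp Require Import reals.
From mathcomp Require Import ring lra.
Set Implicit Arguments.
Unset Strict Implicit.
Unset Printing Implicit Defensive.
Import Order.TTheory GRing.Theory Num.Theory.
Local Open Scope ring_scope.

Lemma exists_pos_lbound (R : realDomainType) (I : finType) (T : {set I})
    (f : I -> R) :
  (forall i, i \in T -> 0 < f i) ->
  exists2 c : R, 0 < c & forall i, i \in T -> c <= f i.
Proof.
move=> f_gt0; have [->|[i0 Ti0]] := set_0Vmem T.
  by exists 1 => // i; rewrite inE.
have [j Tj j_min] := @arg_minP _ R _ i0 (mem T) f Ti0.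
by exists (f j); [exact: f_gt0 | move=> i /j_min].
Qed.

Lemma row_preimage_bounded (R : realFieldType) (p q : nat) (M : 'M[R]_(p, q)) :
  exists2 K : R, 0 <= K &
    forall (w : 'rV_q) (b : R), (w <= M)%MS -> 0 <= b ->
      (forall k, `|w 0 k| <= b) ->
      exists2 u : 'rV_p, u *m M = w & forall i, `|u 0 i| <= b * K.
Proof.
set P := pinvmx M; exists (\sum_i \sum_k `|P k i|).
  by rewrite !sumr_ge0 // => i _; rewrite sumr_ge0.
move=> w b wM b_ge0 w_le; exists (w *m P); first exact: mulmxKpV.
move=> i; rewrite mxE (le_trans (ler_norm_sum _ _ _)) //.
apply: (@le_trans _ _ (b * \sum_k `|P k i|)).
  by rewrite mulr_sumr ler_sum // => k _; rewrite normrM ler_wpM2r.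
rewrite ler_wpM2l // (bigD1 i) //= lerDl sumr_ge0 // => j _.
by rewrite sumr_ge0.
Qed.

Lemma masked_preimage_bounded (R : realFieldType) (n m : nat)
    (A : 'M[R]_(n, m)) (T : {set 'I_m}) :
  exists2 K : R, 0 <= K &
    forall (x : 'cV_m) (b : R), (forall i, i \notin T -> x i 0 = 0) -> 0 <= b ->
      (forall k, `|(A *m x) k 0| <= b) ->
      exists y : 'cV_m, [/\ A *m y = A *m x,
        forall i, i \notin T -> y i 0 = 0 & forall i, `|y i 0| <= b * K].
Proof.
set D : 'M[R]_m := diag_mx (\row_i (i \in T)%:R).
have maskE (u : 'rV_m) i : (u *m D) 0 i = u 0 i * (i \in T)%:R.
  by rewrite mul_mx_diag !mxE.
have [K K_ge0 preimage] := row_preimage_bounded (D *m A^T).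
exists K => // x b xT b_ge0 Ax_le.
have xD : x^T *m D = x^T.
  apply/matrixP=> i j; rewrite [i]ord1 maskE mxE.
  by case: (boolP (j \in T)) => [_|/xT ->]; rewrite ?mulr1 ?mul0r.
have wM : (A *m x)^T = x^T *m (D *m A^T) by rewrite mulmxA xD trmx_mul.
have [|||u uM u_le] := preimage (A *m x)^T b => //.
- by rewrite wM submxMl.
- by move=> k; rewrite mxE.
(* D *m A^T has zero rows outside T, so preimages can be masked by D. *)
exists (u *m D)^T; split.
- by rewrite -[LHS]trmxK trmx_mul trmxK -mulmxA uM trmxK.
- by move=> i iT; rewrite mxE maskE (negbTE iT) mulr0.
- move=> i; rewrite mxE maskE normrM (le_trans _ (u_le i)) //.
  by case: (i \in T); rewrite ?normr1 ?normr0 ?mulr1 ?mulr0.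
Qed.

Lemma exists_lt_of_sum_eq (R : realDomainType) (m : nat) (mu lam : 'cV[R]_m) :
  \sum_i mu i 0 = \sum_i lam i 0 -> mu != lam -> exists i, mu i 0 < lam i 0.
Proof.
move=> sum_eq mu_neq.
have [/existsP[i lt_i]|/existsPn no_lt] := boolP [exists i, mu i 0 < lam i 0].
  by exists i.
case/eqP: mu_neq; apply/matrixP => i j; rewrite [j]ord1.
apply/eqP; rewrite -subr_eq0; apply/eqP.
have ge0 k : 0 <= mu k 0 - lam k 0 by rewrite subr_ge0 leNgt no_lt.
have sum0 : \sum_k (mu k 0 - lam k 0) = 0 by rewrite sumrB sum_eq subrr.
exact: (psumr_eq0P (fun k _ => ge0 k) sum0).
Qed.

Lemma const_row1_mulE (R : pzSemiRingType) (m : nat) (v : 'cV[R]_m) :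
  ((const_mx 1 : 'rV[R]_m) *m v) 0 0 = \sum_i v i 0.
Proof. by rewrite mxE; apply: eq_bigr => i _; rewrite mxE mul1r. Qed.

Section WeightVectors.
Variables (R : realType) (d m : nat) (V : 'M[R]_(d, m)) (r : 'cV[R]_d).

Lemma sqdist_lt_coord (x y : 'cV[R]_d) (eps : R) k :
  0 <= eps -> sqdist x y < eps ^+ 2 -> `|x k 0 - y k 0| < eps.
Proof.
move=> eps_ge0 xy_lt; rewrite -ltr_sqr ?nnegrE // real_normK ?num_real //.
apply: le_lt_trans xy_lt; rewrite /sqdist (bigD1 k) //= lerDl.
by rewrite sumr_ge0 // => j _; rewrite sqr_ge0.
Qed.

Lemma weight_vector_balanced (g : 'cV[R]_m) :
  weight_vector V r g -> balanced V r (supp g).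
Proof.
move=> [g_ge0 [g_sum1 Vg]]; set T := supp g.
have gT i : i \notin T -> g i 0 = 0 by rewrite inE negbK => /eqP.
split; first by exists g.
have [c c_gt0 c_le] : exists2 c : R, 0 < c & forall i, i \in T -> c <= g i 0.
  by apply: exists_pos_lbound => i; rewrite inE lt0r => ->; exact: g_ge0.
set A := col_mx V (const_mx 1 : 'rV[R]_m).
have [K K_ge0 preimage] := masked_preimage_bounded A T.
have K1_gt0 : 0 < K + 1 by rewrite ltr_wpDl.
set eps := c / (K + 1).
have eps_gt0 : 0 < eps by rewrite divr_gt0.
have epsK_lt : eps * K < c.
  by rewrite /eps mulrAC ltr_pdivrMr // ltr_pM2l // ltrDl.
exists eps; split => // x [mu [muT [mu_sum1 Vmu]]] x_near.
have A_delta : A *m (mu - g) = col_mx (x - r) 0.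
  rewrite mul_col_mx mulmxBr Vmu Vg; congr col_mx.
  apply/matrixP => i j; rewrite [i]ord1 [j]ord1 const_row1_mulE mxE.
  under eq_bigr do rewrite !mxE.
  by rewrite sumrB mu_sum1 g_sum1 subrr.
have [|||e [Ae eT e_le]] := preimage (mu - g) eps.
- by move=> i iT; rewrite !mxE muT // gT // subrr.
- exact: ltW.
- move=> k; rewrite A_delta -[k]splitK; case: (split k) => j /=.
    by rewrite col_mxEu !mxE ltW // sqdist_lt_coord // ltW.
  by rewrite col_mxEd mxE normr0 ltW.
move: Ae; rewrite A_delta mul_col_mx => /eq_col_mx [Ve sum_e0].
exists (g + e); split; [|split; [|split]].
- move=> i; rewrite mxE; case: (boolP (i \in T)) => iT; last first.
    by rewrite gT // eT // addr0.
  have := c_le i iT; have := le_lt_trans (e_le i) epsK_lt.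
  rewrite ltr_norml => /andP[]; lra.
- by move=> i iT; rewrite mxE gT // eT // addr0.
- under eq_bigr do rewrite mxE.
  by rewrite big_split /= g_sum1 -const_row1_mulE sum_e0 mxE addr0.
- by rewrite mulmxDr Vg Ve addrC subrK.
Qed.

Lemma minimal_balanced_supp (S : {set 'I_m}) (g : 'cV[R]_m) :
  minimal_balanced V r S -> lambda_set V r S g -> supp g = S.
Proof.
move=> [_ S_min] [g_wv gS]; apply/eqP; apply: contraT => gS_neq.
case: (S_min (supp g)); last exact: weight_vector_balanced.
by rewrite properEneq gS_neq.
Qed.

Lemma weight_vector_line_exit (lam mu : 'cV[R]_m) :
  weight_vector V r lam -> weight_vector V r mu -> mu != lam ->
  exists2 ga, weight_vector V r ga & supp ga \proper supp lam :|: supp mu.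
Proof.
move=> [lam_ge0 [lam_sum1 Vlam]] [mu_ge0 [mu_sum1 Vmu]] mu_neq.
have [i0 lt_i0] := exists_lt_of_sum_eq (etrans mu_sum1 (esym lam_sum1)) mu_neq.
have [j lt_j s_le] := @arg_minP _ R _ i0 (fun i => mu i 0 < lam i 0)
  (fun i => lam i 0 / (lam i 0 - mu i 0)) lt_i0.
set s := lam j 0 / (lam j 0 - mu j 0).
have dj_gt0 : 0 < lam j 0 - mu j 0 by rewrite subr_gt0.
have lam_j_gt0 : 0 < lam j 0 by exact: le_lt_trans (mu_ge0 j) lt_j.
have s_ge0 : 0 <= s by rewrite divr_ge0 // ltW.
set ga := (1 - s) *: lam + s *: mu.
have gaE i : ga i 0 = lam i 0 - s * (lam i 0 - mu i 0).
  by rewrite !mxE; ring.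
exists ga.
  split; [|split].
  - move=> i; rewrite gaE subr_ge0.
    case: (ltP (mu i 0) (lam i 0)) => [lt_i|le_i].
      by rewrite -ler_pdivlMr ?subr_gt0 //; exact: s_le.
    by rewrite (le_trans _ (lam_ge0 i)) // mulr_ge0_le0 // subr_le0.
  - under eq_bigr do rewrite gaE.
    by rewrite sumrB -mulr_sumr sumrB lam_sum1 mu_sum1 subrr mulr0 subr0.
  - by rewrite mulmxDr -!scalemxAr Vlam Vmu -scalerDl subrK scale1r.
rewrite properE; apply/andP; split.
  apply/subsetP => i; rewrite !inE; apply: contraR; rewrite negb_or !negbK.
  by move=> /andP[/eqP lam0 /eqP mu0]; rewrite gaE lam0 mu0 subrr mulr0 subrr.
apply/subsetPn; exists j.
  by rewrite !inE gt_eqF.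
by rewrite inE negbK gaE divfK ?subrr // gt_eqF.
Qed.

Lemma minimal_balanced_lambda_unique (S : {set 'I_m}) (lam mu : 'cV[R]_m) :
  minimal_balanced V r S -> lambda_set V r S lam -> lambda_set V r S mu ->
  mu = lam.
Proof.
move=> S_min Slam Smu; apply/eqP; apply: contraT => mu_neq.
have [ga ga_wv ga_proper] := weight_vector_line_exit Slam.1 Smu.1 mu_neq.
have suppU : supp lam :|: supp mu = S.
  by rewrite !(minimal_balanced_supp S_min) // setUid.
have Sga : lambda_set V r S ga by split; rewrite // -suppU proper_sub.
by move: ga_proper; rewrite suppU (minimal_balanced_supp S_min Sga) properxx.
Qed.

Lemma supp_subset_conic_comb (mu nu : 'cV[R]_m) (t s : R) :
  0 < t -> 0 <= s -> (forall i, 0 <= mu i 0) -> (forall i, 0 <= nu i 0) ->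
  supp mu \subset supp (t *: mu + s *: nu).
Proof.
move=> t_gt0 s_ge0 mu_ge0 nu_ge0; apply/subsetP => i.
rewrite !inE !mxE => mu_i.
by rewrite gt_eqF // ltr_wpDr ?mulr_ge0 // mulr_gt0 // lt0r mu_i mu_ge0.
Qed.

End WeightVectors.

Theorem proposition1 (R : realType) (d m : nat) (V : 'M[R]_(d, m))
    (r : 'cV[R]_d) :
  injective (fun i : 'I_m => col i V) ->
  forall S : {set 'I_m}, minimal_balanced V r S ->
  forall lam : 'cV[R]_m, lambda_set V r S lam -> extreme_point V r lam.
Proof.
move=> _ S S_min lam Slam; split; first exact: Slam.1.
move=> mu nu t mu_wv nu_wv t_gt0 t_lt1 lam_comb.
have [mu_ge0 nu_ge0] := (mu_wv.1, nu_wv.1).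
have Smu : lambda_set V r S mu.
  split=> //; apply: subset_trans Slam.2.
  by rewrite lam_comb supp_subset_conic_comb // subr_ge0 ltW.
have Snu : lambda_set V r S nu.
  split=> //; apply: subset_trans Slam.2.
  by rewrite lam_comb addrC supp_subset_conic_comb ?subr_gt0 //; exact: ltW.
by split; apply: minimal_balanced_lambda_unique Slam _.
Qed.
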